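(* Suppose that $\Lambda$ is a row-finite $k$-graph with no sources. If there exists a vector $\xi \in \mathbb{R}^{\Lambda^0}_{>0}$ which is an eigenvector for each adjacency matrix $A_i$ of $\Lambda$, with eigenvalue $\beta_i$, then the formula $\mu(Z(\lambda)) := \beta^{-d(\lambda)} \xi_{s(\lambda)}$ ($\lambda\in\Lambda$) defines a measure on the Borel $\sigma$-algebra of $\Lambda^\infty$.
   Context: A $k$-graph is a countable small category $\Lambda$ with a functor $d:\Lambda\to\mathbb{N}^k$ with unique factorization; vertices $\Lambda^0$, range/source $r,s$; $v\Lambda^n w$ the paths of degree $n$ with range $v$ and source $w$; row-finite/no sources: $v\Lambda^n$ finite/nonempty. The adjacency matrices are $A_i(v,w)=|v\Lambda^{e_i}w|$, $1\le i\le k$. For $n\in\mathbb{Z}^k$, $\beta^n=\beta_1^{n_1}\cdots\beta_k^{n_k}$. $\Lambda^\infty$ is the set of infinite paths (degree-preserving functors $\Omega_k\to\Lambda$, where $\Omega_k$ has morphisms $(m,n)$ with $m\le n$ in $\mathbb{N}^k$), $Z(\lambda)$ the cylinder set of infinite paths beginning with $\lambda$; the cylinder sets generate the topology and the Borel $\sigma$-algebra. *)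

From mathcomp Require Import all_boot all_order all_algebra.
From mathcomp Require Import all_classical all_reals all_analysis.
Set Implicit Arguments. Unset Strict Implicit. Unset Printing Implicit Defensive.
Import Order.TTheory GRing.Theory Num.Theory.
Local Open Scope classical_set_scope.
Local Open Scope ring_scope.

Definition Nk (k : nat) := {ffun 'I_k -> nat}.
Definition addk k (m n : Nk k) : Nk k := [ffun i => (m i + n i)%N].
Definition subk k (n m : Nk k) : Nk k := [ffun i => (n i - m i)%N].
Definition zerok k : Nk k := [ffun => 0%N].
Definition ek k (i : 'I_k) : Nk k := [ffun j => nat_of_bool (j == i)].
Definition lek k (m n : Nk k) : bool := [forall i, (m i <= n i)%N].

(* A k-graph: a countable small category (objects [kvert], morphisms [kpath],
   range/source [krng]/[ksrc], composition [kcomp l m] = "l m" meaningful when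
   [ksrc l = krng m], identities [kid]) with a degree functor [kdeg] into N^k
   satisfying unique factorization. *)
Record kgraph (k : nat) := KGraph {
  kvert : countType;
  kpath : countType;
  krng : kpath -> kvert;
  ksrc : kpath -> kvert;
  kcomp : kpath -> kpath -> kpath;
  kid : kvert -> kpath;
  kdeg : kpath -> Nk k;
  rng_comp : forall l m, ksrc l = krng m -> krng (kcomp l m) = krng l;
  src_comp : forall l m, ksrc l = krng m -> ksrc (kcomp l m) = ksrc m;
  comp_assoc : forall l m n, ksrc l = krng m -> ksrc m = krng n ->
    kcomp (kcomp l m) n = kcomp l (kcomp m n);
  rng_idp : forall v, krng (kid v) = v;
  src_idp : forall v, ksrc (kid v) = v;
  comp_idl : forall l, kcomp (kid (krng l)) l = l;
  comp_idr : forall l, kcomp l (kid (ksrc l)) = l;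
  deg_comp : forall l m, ksrc l = krng m -> kdeg (kcomp l m) = addk (kdeg l) (kdeg m);
  deg_idp : forall v, kdeg (kid v) = zerok k;
  unique_factorization : forall l (m n : Nk k), kdeg l = addk m n ->
    exists! p : kpath * kpath,
      [/\ ksrc p.1 = krng p.2, kdeg p.1 = m, kdeg p.2 = n & l = kcomp p.1 p.2]
}.

Section KGraphDefs.
Variables (k : nat) (L : kgraph k).

Definition paths_from (v : kvert L) (n : Nk k) : set (kpath L) :=
  [set l | krng l = v /\ kdeg l = n].
Definition paths_between (v : kvert L) (n : Nk k) (w : kvert L) : set (kpath L) :=
  [set l | [/\ krng l = v, kdeg l = n & ksrc l = w]].

Definition row_finite := forall v n, finite_set (paths_from v n).
Definition no_sources := forall v n, paths_from v n !=set0.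

(* Adjacency matrix A_i(v,w) = |v Lambda^{e_i} w|, as an extended real
   (the cardinality, i.e. the counting sum of 1 over the set). *)
Definition adjacency (R : realType) (i : 'I_k) (v w : kvert L) : \bar R :=
  (\esum_(l in paths_between v (ek i) w) 1)%E.

(* Infinite paths: degree-preserving functors Omega_k -> Lambda, encoded by
   their action on morphisms (m,n), m <= n; off the domain (~~ m <= n) the
   value is normalised to x m m so that a functor has a unique encoding. *)
Definition is_inf_path (x : Nk k -> Nk k -> kpath L) : Prop :=
  [/\ forall m n, lek m n -> kdeg (x m n) = subk n m,
      forall m n p, lek m n -> lek n p ->
        ksrc (x m n) = krng (x n p) /\ kcomp (x m n) (x n p) = x m p,
      forall m, x m m = kid (krng (x m m))
    & forall m n, ~~ lek m n -> x m n = x m m].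

Definition inf_path := {x : Nk k -> Nk k -> kpath L | is_inf_path x}.

Definition cylinder (l : kpath L) : set inf_path :=
  [set x | proj1_sig x (zerok k) (kdeg l) = l].

Definition cylinders : set (set inf_path) := [set cylinder l | l in setT].

Definition borel_inf_path : set (set inf_path) := <<s cylinders >>.

End KGraphDefs.

(* mu is a (positive, extended-real valued) measure on the sigma-algebra S:
   this is the literal content of the library's measure axioms
   (measure0, measure_ge0, measure_semi_sigma_additive) for a set system S. *)
Definition is_measure_on (R : realType) (T : Type) (S : set (set T))
    (mu : set T -> \bar R) : Prop :=
  [/\ mu set0 = 0%E,
      forall A, S A -> (0 <= mu A)%E
    & forall F : nat -> set T, (forall i, S (F i)) -> trivIset setT F ->
        ((fun n => \sum_(0 <= i < n) mu (F i))%E @ \oo --> mu (\bigcup_n F n))].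

Definition beta_pow_neg (R : realType) k (beta : 'I_k -> R) (n : Nk k) : R :=
  \prod_(i < k) (beta i ^- n i).

From Pilot Require Import Defs.
From mathcomp Require Import all_boot all_order all_algebra.
From mathcomp Require Import all_classical all_reals all_analysis.
Import Order.TTheory GRing.Theory Num.Theory.
Local Open Scope classical_set_scope.
Local Open Scope ring_scope.
Set Implicit Arguments. Unset Strict Implicit. Unset Printing Implicit Defensive.

(* The measure is the image of Lebesgue measure under a coding of points of
   the real line by infinite paths.  Give each vertex v an interval of length
   xi_v, the intervals laid side by side, and cut the interval of a path l of
   degree (N,...,N) into consecutive pieces, one for each extension l q with
   d(q) = (1,...,1), of length beta^(-d(l q)) xi_(s(l q)).  The pieces exactly
   fill the interval because xi is a common eigenvector: summing
   beta^(-n) xi_(s(mu)) over mu in v Lambda^n gives xi_v.  A point t of the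
   union of the vertex intervals thus lies in the intervals of a unique tower
   of square paths, which determines an infinite path code(t), and the
   preimage of Z(l) is the disjoint union of the intervals of the paths l mu
   with d(l mu) = (M,...,M), of total length beta^(-d(l)) xi_(s(l)). *)

Local Notation kcomp := Defs.kcomp.

Section Degrees.
Variable k : nat.
Implicit Types m n : Nk k.

Definition square N : Nk k := [ffun => N].
Definition sizek n := (\sum_(i < k) n i)%N.

Lemma addKk m n : subk (addk m n) m = n.
Proof. by apply/ffunP => i; rewrite !ffunE addKn. Qed.

Lemma subkK m n : lek m n -> addk m (subk n m) = n.
Proof. by move=> /forallP mn; apply/ffunP => i; rewrite !ffunE subnKC. Qed.

Lemma subkk n : subk n n = zerok k.
Proof. by apply/ffunP => i; rewrite !ffunE subnn. Qed.

Lemma lekk n : lek n n.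
Proof. exact/forallP. Qed.

Lemma lek_trans m n p : lek m n -> lek n p -> lek m p.
Proof.
by move=> /forallP mn /forallP np; apply/forallP => i; exact: leq_trans (mn i) (np i).
Qed.

Lemma lek_addr m n : lek m (addk m n).
Proof. by apply/forallP => i; rewrite ffunE leq_addr. Qed.

Lemma le0k n : lek (zerok k) n.
Proof. by apply/forallP => i; rewrite ffunE. Qed.

Lemma lek_square M N : (M <= N)%N -> lek (square M) (square N).
Proof. by move=> MN; apply/forallP => i; rewrite !ffunE. Qed.

Lemma square0 : square 0 = zerok k.
Proof. by apply/ffunP => i; rewrite !ffunE. Qed.

Lemma squareS N : square N.+1 = addk (square N) (square 1).
Proof. by apply/ffunP => i; rewrite !ffunE addn1. Qed.

Lemma lek_square_sizek n : lek n (square (sizek n)).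
Proof. by apply/forallP => i; rewrite ffunE /sizek (bigD1 i) //= leq_addr. Qed.

Lemma sizek_eq0 n : sizek n = 0%N -> n = zerok k.
Proof.
move=> n0; apply/ffunP => i; apply/eqP; rewrite ffunE -leqn0.
by have := forallP (lek_square_sizek n) i; rewrite ffunE n0.
Qed.

Lemma sizek_addk_ek n i : sizek (addk n (ek i)) = (sizek n).+1.
Proof.
rewrite /sizek (eq_bigr (fun j => n j + ek i j)%N) => [|j _]; last by rewrite ffunE.
rewrite big_split /= -addn1; congr (_ + _)%N.
rewrite (bigD1 i) //= big1 => [|j /negbTE ji]; first by rewrite ffunE eqxx.
by rewrite ffunE ji.
Qed.

Lemma sizekS n N : sizek n = N.+1 -> exists i n', n = addk n' (ek i) /\ sizek n' = N.
Proof.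
move=> nN; have [i ni] : exists i, (0 < n i)%N.
  apply/existsP; apply: contraTT isT; rewrite negb_exists => /forallP n0.
  by move: nN; rewrite /sizek big1 // => j _; apply/eqP; rewrite -leqn0 leqNgt n0.
pose n' := subk n (ek i).
have nE : n = addk n' (ek i).
  by apply/ffunP => j; rewrite !ffunE; case: eqP => [->|_]; rewrite ?subn0 ?addn0 ?subnK.
by exists i, n'; split => //; apply/eq_add_S; rewrite -(sizek_addk_ek _ i) -nE.
Qed.

End Degrees.

Section Factorization.
Variables (k : nat) (L : kgraph k).
Implicit Types (l p q : kpath L) (m n : Nk k).

Definition is_factorization l m (pq : kpath L * kpath L) :=
  [/\ ksrc pq.1 = krng pq.2, kdeg pq.1 = m, kdeg pq.2 = subk (kdeg l) m
    & l = kcomp pq.1 pq.2].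

Definition kfactor l m := xget (l, l) (is_factorization l m).

Lemma factorization_exists_unique l m : lek m (kdeg l) ->
  exists! pq, is_factorization l m pq.
Proof. by move=> ml; apply: unique_factorization; rewrite subkK. Qed.

Lemma kfactorP l m : lek m (kdeg l) -> is_factorization l m (kfactor l m).
Proof.
by move=> /factorization_exists_unique [pq [lpq _]]; apply: xgetPex; exists pq.
Qed.

Lemma kfactor_uniq l m pq : lek m (kdeg l) -> is_factorization l m pq ->
  kfactor l m = pq.
Proof.
move=> ml lpq; have [pq' [_ uniq_pq']] := factorization_exists_unique ml.
by rewrite -(uniq_pq' _ lpq) -(uniq_pq' _ (kfactorP ml)).
Qed.

Lemma kfactor_kcomp p q : ksrc p = krng q -> kfactor (kcomp p q) (kdeg p) = (p, q).
Proof.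
move=> pq; have dpq := deg_comp pq.
apply: kfactor_uniq; first by rewrite dpq lek_addr.
by split; rewrite //= dpq addKk.
Qed.

Section Factors.
Variables (l : kpath L) (m : Nk k).
Hypothesis ml : lek m (kdeg l).

Lemma kfactor_src1 : ksrc (kfactor l m).1 = krng (kfactor l m).2.
Proof. by case: (kfactorP ml). Qed.

Lemma kfactor_deg1 : kdeg (kfactor l m).1 = m.
Proof. by case: (kfactorP ml). Qed.

Lemma kfactor_deg2 : kdeg (kfactor l m).2 = subk (kdeg l) m.
Proof. by case: (kfactorP ml). Qed.

Lemma kcomp_kfactor : kcomp (kfactor l m).1 (kfactor l m).2 = l.
Proof. by case: (kfactorP ml). Qed.

Lemma kfactor_rng1 : krng (kfactor l m).1 = krng l.
Proof. by rewrite -{2}kcomp_kfactor rng_comp // kfactor_src1. Qed.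

Lemma kfactor_src2 : ksrc (kfactor l m).2 = ksrc l.
Proof. by rewrite -{2}kcomp_kfactor src_comp // kfactor_src1. Qed.

End Factors.

Lemma kfactor_full l : kfactor l (kdeg l) = (l, kid (ksrc l)).
Proof. by rewrite -{1}(comp_idr l) kfactor_kcomp // rng_idp. Qed.

Lemma kfactor0 l : kfactor l (zerok k) = (kid (krng l), l).
Proof. by rewrite -{1}(comp_idl l) -(deg_idp (krng l)) kfactor_kcomp // src_idp. Qed.

Lemma deg0_kid l : kdeg l = zerok k -> l = kid (krng l).
Proof. by move=> l0; have := kfactor_full l; rewrite l0 kfactor0 => -[]. Qed.

Lemma kcompI p q q' : ksrc p = krng q -> ksrc p = krng q' ->
  kcomp p q = kcomp p q' -> q = q'.
Proof. by move=> pq pq' E; have := kfactor_kcomp pq; rewrite E kfactor_kcomp // => -[]. Qed.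

Lemma kfactor_kfactor l m n : lek m n -> lek n (kdeg l) -> let a := (kfactor l n).1 in
  [/\ (kfactor a m).1 = (kfactor l m).1,
      ksrc (kfactor a m).2 = krng (kfactor l n).2
    & kcomp (kfactor a m).2 (kfactor l n).2 = (kfactor l m).2].
Proof.
move=> mn nl a; have ma : lek m (kdeg a) by rewrite kfactor_deg1.
have bc : ksrc (kfactor a m).2 = krng (kfactor l n).2.
  by rewrite kfactor_src2 // kfactor_src1.
have lE : l = kcomp (kfactor a m).1 (kcomp (kfactor a m).2 (kfactor l n).2).
  by rewrite -comp_assoc ?kfactor_src1 // !kcomp_kfactor.
have := kfactor_kcomp (p := (kfactor a m).1) (q := kcomp (kfactor a m).2 (kfactor l n).2).
by rewrite rng_comp // kfactor_src1 // -lE kfactor_deg1 // => /(_ erefl) ->.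
Qed.

End Factorization.

Section Towers.
Variables (k : nat) (L : kgraph k) (tower : nat -> kpath L).
Hypothesis tower_deg : forall N, kdeg (tower N) = square k N.
Hypothesis tower_compat : forall N, (kfactor (tower N.+1) (square k N)).1 = tower N.

Lemma tower_compat_le N M : (N <= M)%N -> (kfactor (tower M) (square k N)).1 = tower N.
Proof.
elim: M => [|M IH]; first by rewrite leqn0 => /eqP ->; rewrite -tower_deg kfactor_full.
rewrite leq_eqVlt ltnS => /orP [/eqP ->|NM]; first by rewrite -tower_deg kfactor_full.
have MS : lek (square k M) (kdeg (tower M.+1)) by rewrite tower_deg lek_square.
by have [<- _ _] := kfactor_kfactor (lek_square k NM) MS; rewrite tower_compat IH.
Qed.

Lemma kfactor_tower_le n N M : (N <= M)%N -> lek n (square k N) ->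
  (kfactor (tower N) n).1 = (kfactor (tower M) n).1.
Proof.
move=> NM nN; have NMdeg : lek (square k N) (kdeg (tower M)) by rewrite tower_deg lek_square.
by have [<- _ _] := kfactor_kfactor nN NMdeg; rewrite tower_compat_le.
Qed.

Definition tower_init n := (kfactor (tower (sizek n)) n).1.

Lemma tower_initE n M : lek n (square k M) -> tower_init n = (kfactor (tower M) n).1.
Proof.
move=> nM; rewrite /tower_init (kfactor_tower_le (leq_maxl _ M) (lek_square_sizek n)).
by rewrite (kfactor_tower_le (leq_maxr (sizek n) M) nM).
Qed.

Lemma tower_init_deg n : kdeg (tower_init n) = n.
Proof. by rewrite kfactor_deg1 // tower_deg lek_square_sizek. Qed.

Lemma kfactor_tower_init m n : lek m n -> (kfactor (tower_init n) m).1 = tower_init m.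
Proof.
move=> mn; have nS : lek n (kdeg (tower (sizek n))) by rewrite tower_deg lek_square_sizek.
have [-> _ _] := kfactor_kfactor mn nS.
by rewrite (tower_initE (lek_trans mn (lek_square_sizek n))).
Qed.

Definition tower_path m n :=
  if lek m n then (kfactor (tower_init n) m).2 else (kfactor (tower_init m) m).2.

Lemma tower_path_inf : is_inf_path tower_path.
Proof.
split => [m n mn|m n p mn np|m|m n /negbTE nmn]; rewrite /tower_path ?lekk ?mn ?nmn //.
- by rewrite kfactor_deg2 tower_init_deg.
- rewrite np (lek_trans mn np) -(kfactor_tower_init np).
  have np' : lek n (kdeg (tower_init p)) by rewrite tower_init_deg.
  by have [_ ? ?] := kfactor_kfactor mn np'.
- by apply: deg0_kid; rewrite kfactor_deg2 tower_init_deg ?lekk ?subkk.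
Qed.

Lemma tower_path0 n : tower_path (zerok k) n = tower_init n.
Proof. by rewrite /tower_path le0k kfactor0. Qed.

End Towers.

Lemma fsbig_fibers (R : Type) (idx : R) (op : Monoid.com_law idx) (T U : choiceType)
    (A : set T) (P : set U) (g : T -> U) (f : T -> R) :
  finite_set A -> finite_set P -> (forall x, A x -> P (g x)) ->
  \big[op/idx]_(x \in A) f x =
  \big[op/idx]_(u \in P) \big[op/idx]_(x \in A `&` g @^-1` [set u]) f x.
Proof.
move=> finA finP AP; under [RHS]eq_fsbigr do rewrite fsbig_mkcondr.
rewrite exchange_fsbig //; apply: eq_fsbigr => x /[!inE] Ax.
rewrite (fsbigD1 (g x)) //; last exact: AP.
rewrite ifT ?inE // fsbig1 ?Monoid.simpm // => u [_ /= ux].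
by rewrite ifF //; apply/negbTE; rewrite notin_setE => /esym.
Qed.

Section PathSums.
Variables (k : nat) (L : kgraph k).
Hypothesis rowfin : row_finite L.

Lemma paths_from0 (v : kvert L) : paths_from v (zerok k) = [set kid v].
Proof.
apply/seteqP; split => [l [<- /deg0_kid //]|_ ->].
by split; rewrite ?rng_idp ?deg_idp.
Qed.

Lemma fsbig_paths_fromD (R : Type) (idx : R) (op : Monoid.com_law idx)
    (F : kpath L -> R) (v : kvert L) (m n : Nk k) :
  \big[op/idx]_(mu \in paths_from v (addk m n)) F mu =
  \big[op/idx]_(nu \in paths_from v m) \big[op/idx]_(e \in paths_from (ksrc nu) n)
     F (kcomp nu e).
Proof.
have m_mn (mu : kpath L) : kdeg mu = addk m n -> lek m (kdeg mu) by move=> ->; exact: lek_addr.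
rewrite (@fsbig_fibers _ _ _ _ _ _ (paths_from v m) (fun mu => (kfactor mu m).1)) //; last first.
  by move=> mu [<- /m_mn mmu]; rewrite /paths_from /= kfactor_rng1 ?kfactor_deg1.
apply: eq_fsbigr => nu /set_mem [nu_rng nu_deg].
apply: reindex_fsbig; split.
- move=> e [e_rng e_deg].
  have nue : kdeg (kcomp nu e) = addk m n by rewrite deg_comp // nu_deg e_deg.
  by split; [split; rewrite ?rng_comp | rewrite /preimage /= -nu_deg kfactor_kcomp].
- by move=> e e' /set_mem [e_rng _] /set_mem [e'_rng _]; exact: kcompI.
move=> mu [[mu_rng mu_deg] /= mu_nu]; have mmu := m_mn mu mu_deg.
exists (kfactor mu m).2.
  by rewrite /paths_from /= -mu_nu kfactor_src1 // kfactor_deg2 // mu_deg addKk.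
by rewrite -{1}mu_nu kcomp_kfactor.
Qed.

End PathSums.

Section BetaPow.
Variables (R : realType) (k : nat) (beta : 'I_k -> R).
Local Notation bp := (beta_pow_neg beta).

Lemma beta_pow_negD m n : bp (addk m n) = bp m * bp n.
Proof. by rewrite /beta_pow_neg -big_split; apply: eq_bigr => i _; rewrite ffunE exprD invfM. Qed.

Lemma beta_pow_neg0 : bp (zerok k) = 1.
Proof. by rewrite /beta_pow_neg big1 // => i _; rewrite ffunE expr0 invr1. Qed.

Lemma beta_pow_neg_ek i : bp (ek i) = (beta i)^-1.
Proof.
rewrite /beta_pow_neg (bigD1 i) //= big1 ?mulr1 => [|j /negbTE ji].
  by rewrite ffunE eqxx expr1.
by rewrite ffunE ji expr0 invr1.
Qed.

Lemma beta_pow_neg_gt0 n : (forall i, 0 < beta i) -> 0 < bp n.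
Proof. by move=> beta_gt0; apply: prodr_gt0 => i _; rewrite invr_gt0 exprn_gt0. Qed.

End BetaPow.

Section Eigenvector.
Variables (R : realType) (k : nat) (L : kgraph k).
Variables (xi : kvert L -> R) (beta : 'I_k -> R).
Hypothesis rowfin : row_finite L.
Hypothesis nosrc : no_sources L.
Hypothesis xi_gt0 : forall v, 0 < xi v.
Hypothesis xi_eigen : forall (i : 'I_k) (v : kvert L),
  (\esum_(w in [set: kvert L]) (adjacency R i v w * (xi w)%:E))%E = (beta i * xi v)%:E.
Local Notation bp := (beta_pow_neg beta).

Lemma fsum_paths_from_ek i u : \sum_(e \in paths_from u (ek i)) xi (ksrc e) = beta i * xi u.
Proof.
have xi_ge0 (v : kvert L) : (0 <= (xi v)%:E)%E by rewrite lee_fin ltW.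
have fin_between w : finite_set (paths_between u (ek i) w).
  by apply: sub_finite_set (rowfin u (ek i)) => l [].
have adjE w : (adjacency R i u w * (xi w)%:E =
    \esum_(l in paths_between u (ek i) w) (xi (ksrc l))%:E)%E.
  rewrite /adjacency !esum_fset // fsumEFin // -EFinM mulr_fsuml fsumEFin //.
  by congr (_%:E); apply: eq_fsbigr => l /[!inE] -[_ _ ->]; rewrite mul1r.
apply: EFin_inj; rewrite -xi_eigen (eq_esum (fun w _ => adjE w)) esum_esum //.
rewrite -(@reindex_esum _ _ _ _ (paths_from u (ek i)) snd (fun l => (xi (ksrc l))%:E)).
  by rewrite esum_fset ?fsumEFin.
split => [[w l] /= [_ []] //|[w l] [w' l'] /set_mem [_ [_ _ wl]] /set_mem [_ [_ _ wl']]|].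
  by rewrite /= in wl wl' * => ll'; rewrite -wl -wl' ll'.
by move=> l [? ?]; exists (ksrc l, l).
Qed.

Lemma beta_gt0 (u : kvert L) i : 0 < beta i.
Proof.
have [e [e_rng e_deg]] := nosrc u (ek i).
have : 0 < \sum_(e \in paths_from u (ek i)) xi (ksrc e).
  rewrite (fsbigD1 e) //= ?inE //; apply: (lt_le_trans (xi_gt0 (ksrc e))).
  by rewrite lerDl; apply: fsumr_ge0 => l _; exact: ltW.
by rewrite fsum_paths_from_ek pmulr_lgt0.
Qed.

Lemma fsum_beta_pow_paths_from v n :
  \sum_(mu \in paths_from v n) bp n * xi (ksrc mu) = xi v.
Proof.
move: {2}(sizek n) (erefl (sizek n)) => N; elim: N n v => [|N IH] n v.
  by move=> /sizek_eq0 ->; rewrite paths_from0 fsbig_set1 beta_pow_neg0 mul1r src_idp.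
move=> /sizekS [i [n' [-> n'N]]]; rewrite fsbig_paths_fromD // -(IH n' v n'N).
apply: eq_fsbigr => nu _; under eq_fsbigr => e /set_mem [e_rng _] do rewrite src_comp //.
rewrite -mulr_fsumr fsum_paths_from_ek beta_pow_negD beta_pow_neg_ek.
by rewrite -mulrA mulKf // gt_eqF // (beta_gt0 v).
Qed.

End Eigenvector.

Section SeqOffsets.
Variables (R : realDomainType) (T : eqType) (f : T -> R).
Hypothesis f_ge0 : forall x, 0 <= f x.

Definition seq_offset (s : seq T) (x : T) := \sum_(y <- take (index x s) s) f y.

Lemma sum_take_le (s : seq T) i j : (i <= j)%N ->
  \sum_(y <- take i s) f y <= \sum_(y <- take j s) f y.
Proof. by move=> ij; rewrite -(subnKC ij) takeD big_cat /= lerDl sumr_ge0. Qed.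

Lemma sum_take_index (s : seq T) x : x \in s ->
  \sum_(y <- take (index x s).+1 s) f y = seq_offset s x + f x.
Proof.
by move=> xs; rewrite (take_nth x) ?index_mem // nth_index // -cats1 big_cat big_seq1.
Qed.

Lemma seq_offset_ge0 s x : 0 <= seq_offset s x.
Proof. exact: sumr_ge0. Qed.

Lemma seq_offset_le s x : x \in s -> seq_offset s x + f x <= \sum_(y <- s) f y.
Proof.
move=> xs; have := @sum_take_le s (index x s).+1 (size s).
by rewrite take_size sum_take_index // index_mem; apply.
Qed.

Lemma seq_offset_inj s x y a t : uniq s -> x \in s -> y \in s ->
  a + seq_offset s x <= t < a + seq_offset s x + f x ->
  a + seq_offset s y <= t < a + seq_offset s y + f y -> x = y.
Proof.
move=> s_uniq xs ys; wlog xy : x y xs ys / (index x s <= index y s)%N.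
  by move=> wlog_xy tx ty; case: (leqP (index x s) (index y s)) => [|/ltnW] ?;
    [exact: wlog_xy | apply/esym; exact: wlog_xy].
move=> /andP [_ tx] /andP [ty _]; case: (ltnP (index x s) (index y s)) => xy_lt; last first.
  by rewrite -(nth_index x xs) -(nth_index x ys); congr nth; apply/eqP; rewrite eqn_leq xy.
have : seq_offset s x + f x <= seq_offset s y by rewrite -sum_take_index // sum_take_le.
rewrite -(lerD2l a) addrA => /(lt_le_trans tx) /(lt_le_trans)/(_ ty).
by rewrite ltxx.
Qed.

Lemma seq_offset_cover s a t : uniq s -> a <= t < a + \sum_(y <- s) f y ->
  exists2 x, x \in s & a + seq_offset s x <= t < a + seq_offset s x + f x.
Proof.
elim: s a => [|y s IH] a /=.
  by rewrite big_nil addr0 => _ /andP [/le_lt_trans tt /tt]; rewrite ltxx.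
move=> /andP [ys s_uniq] /andP [at_ ta]; case: (ltP t (a + f y)) => [tay|ayt].
  by exists y; rewrite ?mem_head // /seq_offset /= eqxx big_nil addr0 at_.
have [x xs tx] : exists2 x, x \in s &
    a + f y + seq_offset s x <= t < a + f y + seq_offset s x + f x.
  by apply: IH; rewrite // ayt -addrA; rewrite big_cons in ta.
exists x; first by rewrite in_cons xs orbT.
have yx : (y == x) = false by apply: contraNF ys => /eqP ->.
by rewrite /seq_offset /= yx /= big_cons addrA.
Qed.

End SeqOffsets.

Section PreimageMeasure.
Context d (T1 : measurableType d) (R : realType) (T : Type).
Variables (mu : {measure set T1 -> \bar R}) (D : set T1) (f : T1 -> T) (G : set (set T)).
Hypothesis mD : measurable D.
Hypothesis mfG : forall A, G A -> measurable (D `&` f @^-1` A).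

Lemma g_sigma_preimage_measurable A : <<s G >> A -> measurable (D `&` f @^-1` A).
Proof.
have : sigma_algebra setT [set A | measurable (D `&` f @^-1` A)].
  split => /= [|B mB|F mF].
  - by rewrite preimage_set0 setI0.
  - rewrite setTD preimage_setC -setDE.
    have -> : D `\` f @^-1` B = D `\` (D `&` f @^-1` B) by rewrite setDIr setDv set0U.
    exact: measurableD.
  - by rewrite preimage_bigcup setI_bigcupr; exact: bigcupT_measurable.
by move/smallest_sub; apply.
Qed.

Lemma is_measure_on_preimage : is_measure_on <<s G >> (fun A => mu (D `&` f @^-1` A)).
Proof.
split => [|A _|F GF tF]; rewrite ?preimage_set0 ?setI0 ?measure0 ?measure_ge0 //.
rewrite preimage_bigcup setI_bigcupr; apply: measure_semi_sigma_additive.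
- by move=> n; exact: g_sigma_preimage_measurable.
- apply/trivIsetP => i j _ _ ij; rewrite setIACA -(preimage_setI f).
  by move/trivIsetP : tF => /(_ i j I I ij) ->; rewrite preimage_set0 !setI0.
- by apply: bigcupT_measurable => n; exact: g_sigma_preimage_measurable.
Qed.

End PreimageMeasure.

Lemma is_measure_on0 (R : realType) (T : Type) (S : set (set T)) :
  is_measure_on S (fun _ => 0 : \bar R).
Proof.
split => // F _ _; rewrite (_ : (fun n => _) = fun _ => 0%E); first exact: cvg_cst.
by apply: funext => n; rewrite big1.
Qed.

Section Coding.
Variables (R : realType) (k : nat) (L : kgraph k).
Variables (xi : kvert L -> R) (beta : 'I_k -> R).
Hypothesis rowfin : row_finite L.
Hypothesis nosrc : no_sources L.
Hypothesis xi_gt0 : forall v, 0 < xi v.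
Hypothesis xi_eigen : forall (i : 'I_k) (v : kvert L),
  (\esum_(w in [set: kvert L]) (adjacency R i v w * (xi w)%:E))%E = (beta i * xi v)%:E.
Implicit Types (l p q : kpath L) (N : nat).

Definition weight l := beta_pow_neg beta (kdeg l) * xi (ksrc l).

Definition square_paths N : set (kpath L) := [set l | kdeg l = square k N].

Definition children p : seq (kpath L) :=
  finmap.enum_fset (fset_set (paths_from (ksrc p) (square k 1))).

Definition vertex_offset (v : kvert L) : R :=
  \sum_(0 <= j < pickle v) oapp xi 0 (@pickle_inv (kvert L) j).

(* The interval of [l] has length [weight l]: the intervals of the vertices are
   laid out along the pickle order, and the interval of [p q] with [p] of degree
   (N,...,N) and [q] of degree (1,...,1) is the slot of [q] in that of [p]. *)
Fixpoint code_lo N l : R :=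
  if N is N'.+1 then
    let p := (kfactor l (square k N')).1 in
    code_lo N' p + seq_offset (fun q => weight (kcomp p q)) (children p) (kfactor l (square k N')).2
  else vertex_offset (krng l).

Definition code_itv N l : set R := [set t | code_lo N l <= t < code_lo N l + weight l].

Definition coded : set R := \bigcup_(v in [set: kvert L]) code_itv 0 (kid v).

Lemma weight_gt0 l : 0 < weight l.
Proof.
rewrite mulr_gt0 // beta_pow_neg_gt0 // => i.
exact: (beta_gt0 rowfin nosrc xi_gt0 xi_eigen (ksrc l)).
Qed.

Lemma fsum_weight_kcomp l n :
  \sum_(mu \in paths_from (ksrc l) n) weight (kcomp l mu) = weight l.
Proof.
under eq_fsbigr => mu /set_mem [mu_rng mu_deg].
  rewrite /weight deg_comp // src_comp // mu_deg beta_pow_negD -mulrA.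
over.
by rewrite -mulr_fsumr fsum_beta_pow_paths_from.
Qed.

Lemma mem_children p q : (q \in children p) = `[< paths_from (ksrc p) (square k 1) q >].
Proof. by rewrite /children in_fset_set // inE. Qed.

Lemma sum_children_weight p : \sum_(q <- children p) weight (kcomp p q) = weight p.
Proof. by rewrite /children -fsbig_finite // fsum_weight_kcomp. Qed.

Lemma code_lo_kcomp N p q : square_paths N p -> paths_from (ksrc p) (square k 1) q ->
  code_lo N.+1 (kcomp p q) =
  code_lo N p + seq_offset (fun q => weight (kcomp p q)) (children p) q.
Proof. by move=> p_deg [q_rng _] /=; rewrite -p_deg kfactor_kcomp. Qed.

Lemma square_pathsS N l : square_paths N.+1 l ->
  let p := (kfactor l (square k N)).1 in let q := (kfactor l (square k N)).2 in
  [/\ square_paths N p, paths_from (ksrc p) (square k 1) q & kcomp p q = l].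
Proof.
move=> l_deg p q; have Nl : lek (square k N) (kdeg l) by rewrite l_deg lek_square.
split; rewrite /square_paths /= ?kfactor_deg1 ?kcomp_kfactor //.
split; first by rewrite kfactor_src1.
by rewrite kfactor_deg2 // l_deg; apply/ffunP => i; rewrite !ffunE subSnn.
Qed.

Lemma code_itv_kcomp_sub N p q : square_paths N p -> paths_from (ksrc p) (square k 1) q ->
  code_itv N.+1 (kcomp p q) `<=` code_itv N p.
Proof.
move=> p_deg pq t; rewrite /code_itv (code_lo_kcomp p_deg pq) /= => /andP [lo_t t_hi].
have weight_ge0 r : 0 <= weight r by exact/ltW/weight_gt0.
rewrite (le_trans _ lo_t) ?lerDl ?seq_offset_ge0 //= (lt_le_trans t_hi) //.
rewrite -addrA lerD2l -(sum_children_weight p) seq_offset_le // mem_children.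
exact/asboolP.
Qed.

Lemma code_itvS_sub N l : square_paths N.+1 l ->
  code_itv N.+1 l `<=` code_itv N (kfactor l (square k N)).1.
Proof.
move=> l_deg; have [p_deg pq lE] := square_pathsS l_deg.
by rewrite -{1}lE; exact: code_itv_kcomp_sub.
Qed.

Lemma code_itv_sub_coded N l : square_paths N l -> code_itv N l `<=` coded.
Proof.
elim: N l => [|N IH] l l_deg.
  by rewrite [l]deg0_kid -?square0 // => t lt; exists (krng l).
have [p_deg _ _] := square_pathsS l_deg.
by move=> t /(code_itvS_sub l_deg) /(IH _ p_deg).
Qed.

Lemma code_itv_kid v :
  code_itv 0 (kid v) = [set t | vertex_offset v <= t < vertex_offset v + xi v].
Proof. by rewrite /code_itv /= /weight deg_idp beta_pow_neg0 mul1r rng_idp src_idp. Qed.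

Lemma vertex_offset_le u v : (pickle u < pickle v)%N ->
  vertex_offset u + xi u <= vertex_offset v.
Proof.
move=> uv; rewrite /vertex_offset [in leRHS](big_cat_nat (n := (pickle u).+1)) //=.
rewrite big_nat_recr //= pickleK_inv /= lerDl sumr_ge0 // => j _.
by case: pickle_inv => //= w; exact: ltW.
Qed.

Lemma code_itv_kid_inj u v t : code_itv 0 (kid u) t -> code_itv 0 (kid v) t -> u = v.
Proof.
rewrite !code_itv_kid /= => /andP [lo_u u_hi] /andP [lo_v v_hi].
case: (ltngtP (pickle u) (pickle v)) => [uv|vu|/(pcan_inj pickleK_inv) //].
  by have := lt_le_trans (lt_le_trans u_hi (vertex_offset_le uv)) lo_v; rewrite ltxx.
by have := lt_le_trans (lt_le_trans v_hi (vertex_offset_le vu)) lo_u; rewrite ltxx.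
Qed.

Lemma code_itv_kcomp_inj N p q q' t : square_paths N p ->
  paths_from (ksrc p) (square k 1) q -> paths_from (ksrc p) (square k 1) q' ->
  code_itv N.+1 (kcomp p q) t -> code_itv N.+1 (kcomp p q') t -> q = q'.
Proof.
move=> p_deg pq pq'; rewrite /code_itv !code_lo_kcomp //.
apply: seq_offset_inj; rewrite ?mem_children; try exact/asboolP.
- by move=> r; exact/ltW/weight_gt0.
- exact: finmap.fset_uniq.
Qed.

Lemma code_itv_uniq N l l' t : square_paths N l -> square_paths N l' ->
  code_itv N l t -> code_itv N l' t -> l = l'.
Proof.
elim: N l l' => [|N IH] l l'.
  rewrite /square_paths square0 => /deg0_kid -> /deg0_kid -> lt l't.
  by rewrite (code_itv_kid_inj lt l't).
move=> l_deg l'_deg; have [p_deg pq <-] := square_pathsS l_deg.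
have [p'_deg p'q' <-] := square_pathsS l'_deg => lt l't.
have pp' := IH _ _ p_deg p'_deg
  (code_itv_kcomp_sub p_deg pq lt) (code_itv_kcomp_sub p'_deg p'q' l't).
rewrite -pp' in p'q' l't *; congr kcomp; exact: code_itv_kcomp_inj lt l't.
Qed.

Lemma code_itv_exists t : coded t -> forall N, exists2 l, square_paths N l & code_itv N l t.
Proof.
move=> [v _ vt]; elim => [|N [p p_deg pt]].
  by exists (kid v) => //; rewrite /square_paths /= deg_idp square0.
move: pt; rewrite {1}/code_itv -(sum_children_weight p) => pt.
have [q] := seq_offset_cover (finmap.fset_uniq (fset_set (paths_from (ksrc p) (square k 1)))) pt.
rewrite mem_children => /asboolP pq qt; have [q_rng q_deg] := pq.
exists (kcomp p q); last by rewrite /code_itv code_lo_kcomp.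
have pq_src : ksrc p = krng q by rewrite q_rng.
by rewrite /square_paths /= deg_comp // (p_deg : kdeg p = _) q_deg -squareS.
Qed.

Lemma code_itvE N l : code_itv N l = [set` `[code_lo N l, code_lo N l + weight l[%R].
Proof. by apply/seteqP; split => t; rewrite /= in_itv. Qed.

Lemma code_itv_measurable N l : measurable (code_itv N l : set (measurableTypeR R)).
Proof. by rewrite code_itvE; exact: measurable_itv. Qed.

Lemma lebesgue_code_itv N l :
  lebesgue_measure (code_itv N l : set (measurableTypeR R)) = (weight l)%:E.
Proof.
by rewrite code_itvE lebesgue_measure_itv /= lte_fin ltrDl weight_gt0 -EFinB addrAC subrr add0r.
Qed.

Lemma coded_measurable : measurable (coded : set (measurableTypeR R)).
Proof.
by apply: countable_bigcupT_measurable => // v; exact: code_itv_measurable.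
Qed.

Variable v0 : kvert L.

Definition level_path N t : kpath L :=
  xget (kid v0) [set l : kpath L | square_paths N l /\ code_itv N l t].

Lemma square_paths_extend l mu :
  paths_from (ksrc l) (subk (square k (sizek (kdeg l))) (kdeg l)) mu ->
  square_paths (sizek (kdeg l)) (kcomp l mu).
Proof.
by move=> [mu_rng mu_deg]; rewrite /square_paths /= deg_comp // mu_deg subkK // lek_square_sizek.
Qed.

Lemma level_pathP N t : coded t ->
  square_paths N (level_path N t) /\ code_itv N (level_path N t) t.
Proof.
move=> ct; have [l l_deg lt] := code_itv_exists ct N.
by apply: (@xgetPex _ _ [set l : kpath L | square_paths N l /\ code_itv N l t]); exists l.
Qed.

Lemma level_path_eq N t l : coded t -> square_paths N l -> code_itv N l t ->
  level_path N t = l.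
Proof.
by move=> ct l_deg lt; have [? ?] := level_pathP N ct; exact: code_itv_uniq l_deg _ lt.
Qed.

Lemma level_path_compat N t : coded t ->
  (kfactor (level_path N.+1 t) (square k N)).1 = level_path N t.
Proof.
move=> ct; have [l_deg lt] := level_pathP N.+1 ct; have [p_deg _ _] := square_pathsS l_deg.
by apply/esym/level_path_eq => //; exact: code_itvS_sub.
Qed.

Lemma is_inf_path_code t : coded t -> is_inf_path (tower_path (level_path ^~ t)).
Proof.
by move=> ct; apply: tower_path_inf => N; [exact: (level_pathP N ct).1 | exact: level_path_compat].
Qed.

Lemma coded_vertex_offset : coded (vertex_offset v0).
Proof. by exists v0 => //; rewrite code_itv_kid /= lexx ltrDl xi_gt0. Qed.

Definition code (t : R) : inf_path L :=
  match pselect (coded t) with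
  | left ct => exist _ _ (is_inf_path_code ct)
  | right _ => exist _ _ (is_inf_path_code coded_vertex_offset)
  end.

Lemma codeE t : coded t -> proj1_sig (code t) = tower_path (level_path ^~ t).
Proof. by rewrite /code; case: pselect. Qed.

Lemma preimage_code_cylinder l : let M := sizek (kdeg l) in
  coded `&` code @^-1` cylinder l =
  \bigcup_(mu in paths_from (ksrc l) (subk (square k M) (kdeg l))) code_itv M (kcomp l mu).
Proof.
move=> M; apply/seteqP; split => t.
  move=> [ct]; rewrite /cylinder /preimage /= codeE // tower_path0 /tower_init -/M => lE.
  have [lM_deg lMt] := level_pathP M ct; rewrite /square_paths /= in lM_deg.
  have lM : lek (kdeg l) (kdeg (level_path M t)) by rewrite lM_deg lek_square_sizek.
  exists (kfactor (level_path M t) (kdeg l)).2; last by rewrite -{1}lE kcomp_kfactor.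
  by split; [rewrite -(kfactor_src1 lM) lE | rewrite kfactor_deg2 // lM_deg].
move=> [mu l_mu lmu_t]; have [mu_rng _] := l_mu; have lmu_deg := square_paths_extend l_mu.
have ct := code_itv_sub_coded lmu_deg lmu_t.
split => //; rewrite /cylinder /preimage /= codeE // tower_path0 /tower_init -/M.
by rewrite (level_path_eq ct lmu_deg lmu_t) kfactor_kcomp // mu_rng.
Qed.

Definition kgraph_measure (B : set (inf_path L)) : \bar R :=
  lebesgue_measure (coded `&` code @^-1` B : set (measurableTypeR R)).

Lemma kgraph_measure_is_measure : is_measure_on (@borel_inf_path k L) kgraph_measure.
Proof.
apply: is_measure_on_preimage => [|_ [l _ <-]]; first exact: coded_measurable.
rewrite preimage_code_cylinder.
by apply: fin_bigcup_measurable => [|mu _]; [exact: rowfin | exact: code_itv_measurable].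
Qed.

Lemma kgraph_measure_cylinder l : kgraph_measure (cylinder l) = (weight l)%:E.
Proof.
rewrite /kgraph_measure preimage_code_cylinder measure_fin_bigcup //.
- rewrite (eq_fsbigr (fun mu => (weight (kcomp l mu))%:E)) => [|mu _].
    by rewrite fsumEFin // fsum_weight_kcomp.
  exact: lebesgue_code_itv.
- move=> mu mu' l_mu l_mu' [t [mu_t mu'_t]].
  have := code_itv_uniq (square_paths_extend l_mu) (square_paths_extend l_mu') mu_t mu'_t.
  by apply: kcompI; [case: l_mu | case: l_mu'].
- by move=> mu _; exact: code_itv_measurable.
Qed.

End Coding.

Theorem theorem2p19 (R : realType) (k : nat) (L : kgraph k)
    (xi : kvert L -> R) (beta : 'I_k -> R) :
  row_finite L -> no_sources L ->
  (forall v, 0 < xi v) ->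
  (forall (i : 'I_k) (v : kvert L),
     (\esum_(w in [set: kvert L]) (adjacency R i v w * (xi w)%:E))%E
       = (beta i * xi v)%:E) ->
  exists mu : set (inf_path L) -> \bar R,
    is_measure_on (@borel_inf_path k L) mu /\
    forall l : kpath L,
      mu (cylinder l) = (beta_pow_neg beta (kdeg l) * xi (ksrc l))%:E.
Proof.
move=> rowfin nosrc xi_gt0 xi_eigen.
have [[v0 _]|no_vertex] := pselect (exists v : kvert L, True).
  exists (kgraph_measure rowfin nosrc xi_gt0 xi_eigen v0); split.
    exact: kgraph_measure_is_measure.
  exact: kgraph_measure_cylinder.
exists (fun _ => 0%E); split; first exact: is_measure_on0.
by move=> l; case: no_vertex; exists (krng l).
Qed.
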